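(* For every integer $k\ge 2$, the set of maximal simplices of $\mathrm{VR}(T_{3k,3k};k)$ equals $M_{3k,k}\cup N_{3k,k}$, where \[N_{3k,k}=\big\{\{([a],[b]),([a+k],[b]),([a+2k],[b])\},\ \{([a],[b]),([a],[b+k]),([a],[b+2k])\} : 0\le a,b\le 3k-1\big\}.\] For every integer $k\ge 3$, the set of maximal simplices of $\mathrm{VR}(T_{3k-1,3k-1};k)$ equals $M_{3k-1,k}\cup N_{3k-1,k}$, where \[N_{3k-1,k}=\big\{\{([a],[b]),([a+k],[b]),([a+2k-1],[b]),([a+2k],[b])\},\ \{([a],[b]),([a],[b+k]),([a],[b+2k-1]),([a],[b+2k])\} : 0\le a,b\le 3k-2\big\}.\]
   Context: $\mathbb{Z}^2$ carries the $l^1$ metric. $T_{n,n}=\mathbb{Z}^2/(n\mathbb{Z}\times n\mathbb{Z})$ with quotient map $\pi_n$ and quotient metric $d([x],[y])=\min\{d(x',y'):\pi_n(x')=[x],\pi_n(y')=[y]\}$ (equivalently $\{0,\dots,n-1\}^2$ with the $l^1$ product of cyclic metrics); its points are written $([a],[b])$ with $[a]$ the residue of $a$ mod $n$. $\mathrm{VR}(X;r)$ is the simplicial complex on $X$ whose simplices are the finite nonempty subsets of diameter at most $r$; a maximal simplex is one not properly contained in another. $M_{n,k}=\{\pi_n(\sigma):\sigma \text{ a maximal simplex of } \mathrm{VR}(\mathbb{Z}^2;k)\}$. *)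

From HB Require Import structures.
From mathcomp Require Import all_boot all_order all_algebra.
Unset Printing Implicit Defensive.
Import GRing.Theory Num.Theory.

(* It is only used for n >= 2
   (in the theorem n = 3k >= 6 or n = 3k-1 >= 8), where 'Z_n is Z/nZ and the
   values of its elements are the representatives 0..n-1. *)
Notation Tor n := ('Z_n * 'Z_n)%type.

Definition cdist (n : nat) (x y : 'Z_n) : nat :=
  let d := ((val x - val y) + (val y - val x))%N in minn d (n - d).

(* l^1 product of the cyclic metrics = the quotient metric of l^1 on Z^2 *)
Definition tdist (n : nat) (p q : Tor n) : nat :=
  (cdist n p.1 q.1 + cdist n p.2 q.2)%N.

Definition tsimplex (n r : nat) (S : {set Tor n}) : bool :=
  (S != set0) && [forall x in S, forall y in S, tdist n x y <= r].

Definition tmaximal (n r : nat) (S : {set Tor n}) : Prop :=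
  tsimplex n r S /\
  forall S' : {set Tor n}, tsimplex n r S' -> S \subset S' -> S' = S.

Definition zdist (p q : int * int) : nat :=
  (absz (p.1 - q.1)%R + absz (p.2 - q.2)%R)%N.

Definition zsimplex (r : nat) (s : seq (int * int)) : Prop :=
  s <> [::] /\ forall x y, x \in s -> y \in s -> zdist x y <= r.

Definition zmaximal (r : nat) (s : seq (int * int)) : Prop :=
  zsimplex r s /\
  forall t, zsimplex r t -> {subset s <= t} -> {subset t <= s}.

Definition pin (n : nat) (p : int * int) : Tor n :=
  ((p.1)%:~R, (p.2)%:~R)%R.

Definition Mset (n k : nat) (S : {set Tor n}) : Prop :=
  exists s, zmaximal k s /\ S = [set x in map (pin n) s].

Definition pt (n : nat) (a b : int) : Tor n := pin n (a, b).

Definition N3k (k : nat) (S : {set Tor (3 * k)}) : Prop :=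
  exists a b : nat, a < 3 * k /\ b < 3 * k /\
   (S = [set pt (3 * k) a b; pt (3 * k) (a + k)%N b; pt (3 * k) (a + 2 * k)%N b]
    \/
    S = [set pt (3 * k) a b; pt (3 * k) a (b + k)%N; pt (3 * k) a (b + 2 * k)%N]).

Definition N3k1 (k : nat) (S : {set Tor (3 * k - 1)}) : Prop :=
  exists a b : nat, a <= 3 * k - 2 /\ b <= 3 * k - 2 /\
   (S = [set pt (3 * k - 1) a b; pt (3 * k - 1) (a + k)%N b;
             pt (3 * k - 1) (a + 2 * k - 1)%N b; pt (3 * k - 1) (a + 2 * k)%N b]
    \/
    S = [set pt (3 * k - 1) a b; pt (3 * k - 1) a (b + k)%N;
             pt (3 * k - 1) a (b + 2 * k - 1)%N; pt (3 * k - 1) a (b + 2 * k)%N]).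

(* A simplex of VR(T; k) either lifts, around any of its points, to a simplex of
   VR(Z^2; k) -- and then lies in the image of an l^1-diamond, a maximal simplex of
   VR(Z^2; k) -- or contains two points whose distance is only realised by wrapping
   around the torus.  Because the side n of the torus is 3k or 3k - 1, a wrap forces
   the whole simplex onto a single row or column, where the offsets of its points lie
   in a translate of {0, k, 2k}, resp. {0, k, 2k - 1, 2k}.  Conversely, the images of
   diamonds and these lines are simplices that cannot be enlarged: a diamond meets
   two rows and two columns, and every point off a line is at distance > k from one
   of its points. *)

From mathcomp Require Import all_boot all_order all_algebra zify.
Import Order.TTheory GRing.Theory Num.Theory.
Set Implicit Arguments. Unset Strict Implicit.
Local Open Scope ring_scope.

(* The distance from [d] to [nZ] when [|d| <= n]; truncated subtraction makes it 0
   beyond. *)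
Definition cycdist (n : nat) (d : int) : nat := minn (absz d) (n - absz d).

Lemma cycdist_eqmod n (d d' : int) : (absz d <= n)%N -> (absz d' <= n)%N ->
  (n %| d - d')%Z -> cycdist n d = cycdist n d'.
Proof.
move=> hd hd' /dvdzP [e he]; rewrite /cycdist.
have [e_le2|e_gt2] := lerP `|e| 2.
  have : e = 0 \/ e = 1 \/ e = -1 \/ e = 2 \/ e = -2 by lia.
  by case=> [E|[E|[E|[E|E]]]]; rewrite E in he; lia.
have : `|e * n%:Z| <= 2 * n%:Z by rewrite -he; lia.
rewrite normrM; nia.
Qed.

Lemma dvdz_small_eq0 (n : nat) (d : int) : (n %| d)%Z -> (absz d < n)%N -> d = 0.
Proof.
case/dvdzP=> e ->; rewrite abszM /= => lt_en.
by have -> : e = 0 by apply/eqP; rewrite -absz_eq0; nia.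
Qed.

Lemma Zp_intr_val n (x : 'Z_n) : ((val x)%:Z)%:~R = x.
Proof. exact: natr_Zp. Qed.

Lemma cdistE n (x y : 'Z_n) : cdist n x y = cycdist n ((val x)%:Z - (val y)%:Z).
Proof. by rewrite /cdist /cycdist; congr minn; lia. Qed.

Section ZpCoordinates.

Variable n : nat.
Hypothesis n_gt1 : (1 < n)%N.

Lemma Zp_val_lt (x : 'Z_n) : (val x < n)%N.
Proof. by apply: leq_trans (ltn_ord x) _; rewrite (Zp_cast n_gt1). Qed.

Lemma val_Zp_intr (z : int) : (val (z%:~R : 'Z_n))%:Z = (z %% n)%Z.
Proof.
have mod_ge0 : (0 <= z %% n)%Z by apply: modz_ge0; lia.
have mod_lt : (z %% n < n)%Z by apply: ltz_pmod; lia.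
rewrite {1}(divz_eq z n) intrD intrM.
have -> : (n%:Z%:~R : 'Z_n) = 0 by exact: pchar_Zp.
rewrite mulr0 add0r -(gez0_abs mod_ge0) /= val_Zp_nat // modn_small //; lia.
Qed.

Lemma Zp_intr_eq (z w : int) : ((z%:~R : 'Z_n) == w%:~R) = (n %| z - w)%Z.
Proof. by rewrite -eqz_mod_dvd -val_eqE -eqz_nat /= !val_Zp_intr. Qed.

Lemma pin_eq (P Q : int * int) :
  (pin n P == pin n Q) = (n %| P.1 - Q.1)%Z && (n %| P.2 - Q.2)%Z.
Proof. by rewrite xpair_eqE !Zp_intr_eq. Qed.

Lemma dvdz_val_intr (z : int) : (n %| (val (z%:~R : 'Z_n))%:Z - z)%Z.
Proof. by rewrite -Zp_intr_eq Zp_intr_val. Qed.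

Lemma cdist_intr (z w : int) : (absz (z - w) <= n)%N ->
  cdist n z%:~R w%:~R = cycdist n (z - w).
Proof.
move=> zw_le; rewrite cdistE; apply: cycdist_eqmod => //.
  by have := Zp_val_lt z%:~R; have := Zp_val_lt w%:~R; lia.
have := dvdz_val_intr z; have := dvdz_val_intr w.
move=> /dvdzP [e he] /dvdzP [f hf]; apply/dvdzP; exists (f - e); lia.
Qed.

Lemma cdist_intr_le (z w : int) : (cdist n z%:~R w%:~R <= absz (z - w))%N.
Proof.
have [zw_le|zw_gt] := leqP (absz (z - w)) n.
  by rewrite cdist_intr // /cycdist geq_minl.
by rewrite cdistE /cycdist; lia.
Qed.

Lemma tdist_pin_le (P Q : int * int) : (tdist n (pin n P) (pin n Q) <= zdist P Q)%N.
Proof. exact: leq_add (cdist_intr_le _ _) (cdist_intr_le _ _). Qed.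

Lemma tdist_pin (P Q : int * int) :
  (absz (P.1 - Q.1) <= n)%N -> (absz (P.2 - Q.2) <= n)%N ->
  tdist n (pin n P) (pin n Q) = (cycdist n (P.1 - Q.1) + cycdist n (P.2 - Q.2))%N.
Proof. by move=> h1 h2; rewrite /tdist !cdist_intr. Qed.

Lemma cdist_eq0 (x y : 'Z_n) : cdist n x y = 0%N -> x = y.
Proof.
rewrite cdistE /cycdist => h; apply: val_inj.
by have := Zp_val_lt x; have := Zp_val_lt y; lia.
Qed.

End ZpCoordinates.

Definition offset (n : nat) (x y : 'Z_n) : int :=
  let d := (val y)%:Z - (val x)%:Z in
  if (2 * absz d <= n)%N then d else if 0 < d then d - n%:Z else d + n%:Z.

Section Offsets.

Variable n : nat.
Hypothesis n_gt1 : (1 < n)%N.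

Lemma offset_norm (x y : 'Z_n) : absz (offset x y) = cdist n x y.
Proof.
have := Zp_val_lt n_gt1 x; have := Zp_val_lt n_gt1 y.
by rewrite cdistE /cycdist /offset; case: ifP => ?; [|case: ifP => ?]; lia.
Qed.

Lemma intr_offset (x y : 'Z_n) : ((val x)%:Z + offset x y)%:~R = y.
Proof.
rewrite -[RHS]Zp_intr_val; apply/eqP; rewrite Zp_intr_eq //; apply/dvdzP.
by rewrite /offset; case: ifP => _; [exists 0|case: ifP => _; [exists (-1)|exists 1]]; lia.
Qed.

End Offsets.

Section Boxes.

Variable k : nat.

(* In the coordinates x + y and x - y, the maximal simplices of VR(Z^2; k) are the
   squares of side k. *)
Definition in_box (u v : int) (P : int * int) : bool :=
  (u <= P.1 + P.2 <= u + k%:Z) && (v <= P.1 - P.2 <= v + k%:Z).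

Definition int_range (M : nat) : seq int := [seq i%:Z - M%:Z | i <- iota 0 (2 * M).+1].

Definition box (u v : int) : seq (int * int) :=
  let r := int_range (absz u + absz v + k) in
  [seq P <- [seq (x, y) | x <- r, y <- r] | in_box u v P].

Lemma mem_int_range M x : (absz x <= M)%N -> x \in int_range M.
Proof.
move=> x_le; apply/mapP; exists (absz (x + M%:Z)); last by lia.
by rewrite mem_iota; lia.
Qed.

Lemma mem_box u v P : (P \in box u v) = in_box u v P.
Proof.
rewrite mem_filter; case: (boolP (in_box u v P)) => // P_in; rewrite andTb.
by apply/allpairsP; exists (P.1, P.2); case: P P_in => x y /andP [] /= *;
  split => //; apply: mem_int_range; lia.
Qed.

Lemma box_diam u v P Q : in_box u v P -> in_box u v Q -> (zdist P Q <= k)%N.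
Proof. rewrite /in_box /zdist; lia. Qed.

Lemma uv_point (U V : int) :
  exists P : int * int, P.1 + P.2 = U /\ (P.1 - P.2 = V \/ P.1 - P.2 = V + 1).
Proof.
have := divz_eq (U + V + 1) 2; have := @modz_ge0 (U + V + 1) 2 isT.
have := @ltz_pmod (U + V + 1) 2 isT.
set h := ((U + V + 1) %/ 2)%Z; by exists (h, U - h) => /=; lia.
Qed.

Lemma vu_point (U V : int) :
  exists P : int * int, P.1 - P.2 = V /\ (P.1 + P.2 = U \/ P.1 + P.2 = U + 1).
Proof. by have [P ?] := uv_point V U; exists (P.1, - P.2) => /=; lia. Qed.

Lemma zdist_uv P Q : (zdist P Q <= k)%N ->
  [/\ P.1 + P.2 - (Q.1 + Q.2) <= k%:Z, Q.1 + Q.2 - (P.1 + P.2) <= k%:Z,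
      P.1 - P.2 - (Q.1 - Q.2) <= k%:Z & Q.1 - Q.2 - (P.1 - P.2) <= k%:Z].
Proof. by rewrite /zdist => ?; split; lia. Qed.

Lemma zsimplex_sub_box s : zsimplex k s -> exists u v, {subset s <= box u v}.
Proof.
case: s => [[]//|p s] [_ diam].
pose u := \big[Order.min/p.1 + p.2]_(P <- p :: s) (P.1 + P.2).
pose v := \big[Order.min/p.1 - p.2]_(P <- p :: s) (P.1 - P.2).
exists u, v => -[x y] Ps; rewrite mem_box.
have u_le : u <= (x, y).1 + (x, y).2 by apply: ge_bigmin_seq.
have v_le : v <= (x, y).1 - (x, y).2 by apply: ge_bigmin_seq.
have close (Q : int * int) : Q \in p :: s ->
    x + y - k%:Z <= Q.1 + Q.2 /\ x - y - k%:Z <= Q.1 - Q.2.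
  by move=> Qs; have /= [hu _ hv _] := zdist_uv (diam _ Q Ps Qs); split; lia.
have [u_ge v_ge] := close p (mem_head _ _).
have u_ge' : x + y - k%:Z <= u.
  by rewrite /u big_seq; apply: le_bigmin => // Q /close [].
have v_ge' : x - y - k%:Z <= v.
  by rewrite /v big_seq; apply: le_bigmin => // Q /close [].
by move: u_le v_le; rewrite /in_box /=; lia.
Qed.

Hypothesis k_gt0 : (0 < k)%N.

Lemma in_box_of_close u v Z :
  (forall P, in_box u v P -> (zdist P Z <= k)%N) -> in_box u v Z.
Proof.
move=> close.
have [P1 [uP1 vP1]] := uv_point (u + k%:Z) v.
have [P2 [uP2 vP2]] := uv_point u v.
have [P3 [vP3 uP3]] := vu_point u (v + k%:Z).
have [P4 [vP4 uP4]] := vu_point u v.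
have [Z_u_ge _ _ _] := zdist_uv (close P1 ltac:(rewrite /in_box; lia)).
have [_ Z_u_le _ _] := zdist_uv (close P2 ltac:(rewrite /in_box; lia)).
have [_ _ Z_v_ge _] := zdist_uv (close P3 ltac:(rewrite /in_box; lia)).
have [_ _ _ Z_v_le] := zdist_uv (close P4 ltac:(rewrite /in_box; lia)).
rewrite /in_box; lia.
Qed.

Lemma box_zmaximal u v : zmaximal k (box u v).
Proof.
have [P [uP vP]] := uv_point u v.
have P_in : P \in box u v by rewrite mem_box /in_box; lia.
split; first split.
- by move=> box0; rewrite box0 in P_in.
- by move=> P1 P2; rewrite !mem_box; apply: box_diam.
move=> t [_ diam] sub Z Zt; rewrite mem_box; apply: in_box_of_close => Q Q_in.
by apply: diam => //; apply: sub; rewrite mem_box.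
Qed.

Lemma zmaximal_box s : zmaximal k s -> exists u v, s =i box u v.
Proof.
case=> s_simplex s_max; have [u [v sub]] := zsimplex_sub_box s_simplex.
exists u, v => P; apply/idP/idP => [/sub //|].
exact: s_max (proj1 (box_zmaximal u v)) sub P.
Qed.

End Boxes.

Definition pbox n k u v : {set Tor n} := [set x in map (pin n) (box k u v)].

Lemma pboxP n k u v x :
  reflect (exists2 P, in_box k u v P & x = pin n P) (x \in pbox n k u v).
Proof.
rewrite inE; apply: (iffP mapP) => -[P P_in ->]; exists P => //;
  by move: P_in; rewrite mem_box.
Qed.

Lemma mem_pbox n k u v P : in_box k u v P -> pin n P \in pbox n k u v.
Proof. by move=> P_in; apply/pboxP; exists P. Qed.

Lemma Mset_pbox n k S : (0 < k)%N ->
  Mset n k S <-> exists u v, S = pbox n k u v.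
Proof.
move=> k_gt0; split=> [[s [s_max ->]]|[u [v ->]]].
  have [u [v s_box]] := zmaximal_box k_gt0 s_max.
  by exists u, v; apply/setP => x; rewrite !inE (eq_mem_map (pin n) s_box).
by exists (box k u v); split => //; apply: box_zmaximal.
Qed.

Lemma tsimplexP n r (S : {set Tor n}) :
  reflect (S != set0 /\ {in S &, forall x y, (tdist n x y <= r)%N}) (tsimplex n r S).
Proof.
apply: (iffP andP) => -[S0 diam]; split=> //.
  by move=> x y xS yS; move/forall_inP/(_ x xS)/forall_inP: diam; apply.
by apply/forall_inP => x xS; apply/forall_inP => y yS; apply: diam.
Qed.

Section TorusBoxes.

Variables n k : nat.
Hypotheses (k_gt0 : (0 < k)%N) (k_small : (2 * k < n)%N).

Let n_gt1 : (1 < n)%N. Proof. lia. Qed.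

Lemma pbox_simplex u v : tsimplex n k (pbox n k u v).
Proof.
have [P uvP] := uv_point u v.
apply/tsimplexP; split.
  by apply/set0Pn; exists (pin n P); apply: mem_pbox; rewrite /in_box; lia.
move=> _ _ /pboxP [P1 P1_in ->] /pboxP [P2 P2_in ->].
exact: leq_trans (tdist_pin_le n_gt1 P1 P2) (box_diam P1_in P2_in).
Qed.

(* Nested images of two diamonds differ by a translation in nZ^2, as 2k < n. *)
Lemma pbox_sub_pbox uA vA uB vB :
  pbox n k uA vA \subset pbox n k uB vB -> pbox n k uB vB \subset pbox n k uA vA.
Proof.
move=> /subsetP sub.
have lift_in P : in_box k uA vA P -> exists2 Q, in_box k uB vB Q &
    (n %| P.1 - Q.1)%Z /\ (n %| P.2 - Q.2)%Z.
  move=> P_in; have /pboxP [Q Q_in PQ] := sub _ (mem_pbox n P_in).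
  by exists Q => //; apply/andP; rewrite -pin_eq // PQ.
have [P0 uvP0] := uv_point uA vA.
have P0_in : in_box k uA vA P0 by rewrite /in_box; lia.
have [Q0 Q0_in [P0Q0_1 P0Q0_2]] := lift_in P0 P0_in.
apply/subsetP => _ /pboxP [Q Q_in ->].
pose Q' := (Q.1 + (P0.1 - Q0.1), Q.2 + (P0.2 - Q0.2)).
have -> : pin n Q = pin n Q'.
  apply/eqP; rewrite pin_eq // /Q' /=; apply/andP; split.
    by move: P0Q0_1 => /dvdzP [e he]; apply/dvdzP; exists (- e); lia.
  by move: P0Q0_2 => /dvdzP [e he]; apply/dvdzP; exists (- e); lia.
apply: mem_pbox; apply: in_box_of_close => // P P_in.
have [R R_in [PR1 PR2]] := lift_in P P_in.
have PP0 := box_diam P_in P0_in; have RQ0 := box_diam R_in Q0_in.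
rewrite /zdist in PP0 RQ0.
have e1 : P.1 - R.1 - (P0.1 - Q0.1) = 0.
  by apply: dvdz_small_eq0 (rpredB PR1 P0Q0_1) _; clear -PP0 RQ0 k_small; lia.
have e2 : P.2 - R.2 - (P0.2 - Q0.2) = 0.
  by apply: dvdz_small_eq0 (rpredB PR2 P0Q0_2) _; clear -PP0 RQ0 k_small; lia.
have -> : zdist P Q' = zdist R Q.
  by rewrite /zdist /=; congr (absz _ + absz _)%N; [clear -e1 | clear -e2]; lia.
exact: box_diam R_in Q_in.
Qed.

Lemma pbox_spread u v : (2 <= k)%N -> exists x y,
  [/\ x \in pbox n k u v, y \in pbox n k u v, x.1 != y.1 & x.2 != y.2].
Proof.
move=> k_ge2; have [P uvP] := uv_point u v.
exists (pin n P), (pin n (P.1 + 1, P.2 + 1)); split.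
- by apply: mem_pbox; rewrite /in_box; lia.
- by apply: mem_pbox; rewrite /in_box /=; lia.
- rewrite /= Zp_intr_eq //; apply/negP => /dvdz_small_eq0; lia.
- rewrite /= Zp_intr_eq //; apply/negP => /dvdz_small_eq0; lia.
Qed.

End TorusBoxes.

Section Wraps.

Variables n k : nat.
Hypotheses (k_ge2 : (2 <= k)%N) (n_ge : (3 * k <= n.+1)%N).

Lemma wrap_horizontal (a1 b1 a2 b2 : int) :
  (absz a1 + absz b1 <= k)%N -> (absz a2 + absz b2 <= k)%N ->
  (cycdist n (a1 - a2) + cycdist n (b1 - b2) <= k)%N ->
  (cycdist n (a1 - a2) < absz (a1 - a2))%N ->
  [/\ b1 = 0, b2 = 0 & (n - k <= absz (a1 - a2))%N].
Proof. rewrite /cycdist => *; split; lia. Qed.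

Lemma wrap_line (a1 a2 a b : int) :
  (absz a1 <= k)%N -> (absz a2 <= k)%N -> (n - k <= absz (a1 - a2))%N ->
  (absz a + absz b <= k)%N ->
  (cycdist n (a - a1) + cycdist n b <= k)%N -> (cycdist n (a - a2) + cycdist n b <= k)%N ->
  b = 0.
Proof.
have tri12 : (absz (a1 - a2) <= absz (a - a1) + absz (a - a2))%N by lia.
have tri1 : (absz (a - a1) <= absz a + absz a1)%N by lia.
have tri2 : (absz (a - a2) <= absz a + absz a2)%N by lia.
(* Abstracting the absolute values leaves a linear problem over nat. *)
move: tri12 tri1 tri2; rewrite /cycdist.
move: (absz (a - a1)) (absz (a - a2)) (absz (a1 - a2)) (absz a) (absz a1) (absz a2).
move=> d1 d2 d12 A A1 A2 *.
have : absz b = 0%N by lia.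
by move/eqP; rewrite absz_eq0 => /eqP.
Qed.

End Wraps.

Definition tswap n (x : Tor n) : Tor n := (x.2, x.1).
Arguments tswap : clear implicits.

Section Swap.

Variables n r : nat.

Lemma tswapK : involutive (tswap n).
Proof. by case. Qed.

Lemma preimset_tswapK (S : {set Tor n}) : tswap n @^-1: (tswap n @^-1: S) = S.
Proof. by apply/setP => x; rewrite !inE tswapK. Qed.

Lemma tsimplex_tswap (S : {set Tor n}) : tsimplex n r S -> tsimplex n r (tswap n @^-1: S).
Proof.
move=> /tsimplexP [/set0Pn [x xS] diam]; apply/tsimplexP; split.
  by apply/set0Pn; exists (tswap n x); rewrite inE tswapK.
by move=> y z; rewrite !inE => yS zS; rewrite /tdist addnC; exact: (diam _ _ yS zS).
Qed.

End Swap.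

Section Lifts.

Variables (n k : nat) (S : {set Tor n}) (p : Tor n).
Hypotheses (n_gt1 : (1 < n)%N) (k_small : (2 * k < n)%N).
Hypotheses (S_simplex : tsimplex n k S) (pS : p \in S).

Definition tlift (s : Tor n) : int * int :=
  ((val p.1)%:Z + offset p.1 s.1, (val p.2)%:Z + offset p.2 s.2).

Lemma pin_tlift s : pin n (tlift s) = s.
Proof. by rewrite /pin /= !intr_offset //; case: s. Qed.

Lemma offset_near (s : Tor n) :
  s \in S -> (absz (offset p.1 s.1) + absz (offset p.2 s.2) <= k)%N.
Proof. by move/tsimplexP: S_simplex => [_ diam] sS; rewrite !offset_norm //; apply: diam. Qed.

Lemma tdist_offset (s t : Tor n) : s \in S -> t \in S ->
  tdist n s t = (cycdist n (offset p.1 s.1 - offset p.1 t.1)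
                 + cycdist n (offset p.2 s.2 - offset p.2 t.2))%N.
Proof.
move=> sS tS; have := offset_near sS; have := offset_near tS => t_near s_near.
have subDl (x a b : int) : x + a - (x + b) = a - b by lia.
rewrite -[in LHS](pin_tlift s) -[in LHS](pin_tlift t) tdist_pin //= !subDl //; lia.
Qed.

End Lifts.

Lemma tmaximal_iff n r (F : {set Tor n} -> Prop) :
  (forall S, tsimplex n r S -> exists2 X, F X & S \subset X) ->
  (forall X, F X -> tsimplex n r X) ->
  (forall X S, F X -> tsimplex n r S -> X \subset S -> S \subset X) ->
  forall S, tmaximal n r S <-> F S.
Proof.
move=> covered F_simplex F_max S; split=> [[S_simplex S_max]|FS].
  by have [X FX SX] := covered S S_simplex; rewrite -(S_max X (F_simplex X FX) SX).
split=> [|S' S'_simplex SS']; first exact: F_simplex.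
by apply/eqP; rewrite eqEsubset F_max.
Qed.

Definition wraps n k (X : seq int) :=
  [/\ {in X, forall x : int, (absz x <= k)%N},
      {in X &, forall x y : int, (cycdist n (x - y) <= k)%N}
    & exists2 x : int, x \in X & exists2 y : int, y \in X & (n - k <= absz (x - y))%N].

Section Patterns.

Variables (n k : nat) (js : seq nat).
Hypotheses (k_ge2 : (2 <= k)%N) (n_ge : (3 * k <= n.+1)%N).
(* [js] lists the offsets of the points of a line wrapping around the torus: its
   translates are simplices, are maximal, and contain every wrapping line. *)
Hypothesis js_lt : {in js, forall j, (j < n)%N}.
Hypothesis js_diam : {in js &, forall i j, (cycdist n (i%:Z - j%:Z) <= k)%N}.
Hypothesis js_far :
  forall t, (t < n)%N -> exists2 j : nat, j \in js & (k <= cycdist n (t%:Z - j%:Z))%N.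
Hypothesis js_closed :
  forall t, (t < n)%N -> {in js, forall j, (cycdist n (t%:Z - j%:Z) <= k)%N} -> t \in js.
Hypothesis js_covers : forall X, wraps n k X ->
  exists c : int, {in X, forall x : int, exists2 j : nat, j \in js & (n %| x - (c + j%:Z))%Z}.

Let n_gt1 : (1 < n)%N. Proof. lia. Qed.
Let k_small : (2 * k < n)%N. Proof. lia. Qed.
Let k_gt0 : (0 < k)%N. Proof. lia. Qed.

Definition trow (a b : nat) : {set Tor n} := [set:: [seq pt n (a + j)%N b | j <- js]].

Definition tcol (a b : nat) : {set Tor n} := [set:: [seq pt n a (b + j)%N | j <- js]].

Lemma tcol_tswap a b : tcol a b = tswap n @^-1: trow b a.
Proof.
apply/setP => x; rewrite !inE; apply/mapP/mapP => -[j js_j xE]; exists j => //.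
  by rewrite xE.
by rewrite -[x]tswapK xE.
Qed.

Lemma mem_trow (a b j : nat) : j \in js -> pt n (a + j)%N b \in trow a b.
Proof. by move=> js_j; rewrite inE; apply: map_f. Qed.

Lemma trow_snd a b x : x \in trow a b -> x.2 = b%:R.
Proof. by rewrite inE => /mapP [j _ ->]. Qed.

Lemma trow_simplex a b : tsimplex n k (trow a b).
Proof.
apply/tsimplexP; split.
  have [j js_j _] := js_far (ltnW n_gt1).
  by apply/set0Pn; exists (pt n (a + j)%N b); apply: mem_trow.
move=> x y; rewrite !inE => /mapP [i js_i ->] /mapP [j js_j ->].
have := js_lt js_i; have := js_lt js_j => j_lt i_lt.
rewrite tdist_pin //=; [| by lia | by lia].
have -> : (a + i)%N%:Z - (a + j)%N%:Z = i%:Z - j%:Z by lia.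
have -> : cycdist n (b%:Z - b%:Z) = 0%N by rewrite subrr /cycdist /= min0n.
by rewrite addn0 js_diam.
Qed.

Lemma trow_maximal a b S : tsimplex n k S -> trow a b \subset S -> S \subset trow a b.
Proof.
move=> /tsimplexP [_ diam] /subsetP row_sub; apply/subsetP => s sS.
set t := val (s.1 - a%:R); have t_lt : (t < n)%N by apply: Zp_val_lt.
have s1E : s.1 = (a + t)%N%:Z%:~R by rewrite -pmulrn natrD natr_Zp addrC subrK.
clearbody t.
have near_row (j : nat) : j \in js -> (cycdist n (t%:Z - j%:Z) + cdist n s.2 b%:R <= k)%N.
  move=> js_j; have := diam _ _ sS (row_sub _ (mem_trow a b js_j)).
  have j_lt := js_lt js_j.
  rewrite /tdist s1E cdist_intr //=; last by lia.
  by have -> : (a + t)%N%:Z - (a + j)%N%:Z = t%:Z - j%:Z by lia.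
have s2E : s.2 = b%:R.
  apply: cdist_eq0 => //; have [j js_j far] := js_far t_lt.
  have := leq_trans (leq_add far (leqnn _)) (near_row j js_j).
  by rewrite -[X in (_ <= X)%N]addn0 leq_add2l leqn0 => /eqP.
have t_in : t \in js by apply: js_closed => // j /near_row; lia.
by rewrite [s]surjective_pairing s1E s2E; apply: mem_trow.
Qed.

Lemma wrapping_simplex_sub_trow S p q r :
  tsimplex n k S -> p \in S -> q \in S -> r \in S ->
  (cycdist n (offset p.1 q.1 - offset p.1 r.1) < absz (offset p.1 q.1 - offset p.1 r.1))%N ->
  exists a b, [/\ (a < n)%N, (b < n)%N & S \subset trow a b].
Proof.
move=> S_simplex pS qS rS wrap.
have near := offset_near n_gt1 S_simplex pS.
have dist (s t : Tor n) : s \in S -> t \in S -> (cycdist n (offset p.1 s.1 - offset p.1 t.1)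
    + cycdist n (offset p.2 s.2 - offset p.2 t.2) <= k)%N.
  move=> sS tS; rewrite -(tdist_offset n_gt1 k_small S_simplex pS sS tS).
  by move/tsimplexP: S_simplex => [_ diam]; apply: diam.
have [bq br far] := wrap_horizontal k_ge2 n_ge (near q qS) (near r rS) (dist q r qS rS) wrap.
have offset2_eq0 (s : Tor n) : s \in S -> offset p.2 s.2 = 0.
  move=> sS; apply: (wrap_line k_ge2 n_ge _ _ far (near s sS)).
  - by have := near q qS; lia.
  - by have := near r rS; lia.
  - by have := dist s q sS qS; rewrite bq subr0.
  - by have := dist s r sS rS; rewrite br subr0.
pose X := [seq offset p.1 s.1 | s <- enum S].
have inX (s : Tor n) : s \in S -> offset p.1 s.1 \in X.
  by move=> sS; apply: map_f; rewrite mem_enum.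
have X_wraps : wraps n k X.
  split.
  - move=> x /mapP [s]; rewrite mem_enum => sS ->.
    exact: leq_trans (leq_addr _ _) (near s sS).
  - move=> x y /mapP [s]; rewrite mem_enum => sS -> /mapP [t]; rewrite mem_enum => tS ->.
    exact: leq_trans (leq_addr _ _) (dist s t sS tS).
  - by exists (offset p.1 q.1); [|exists (offset p.1 r.1)]; rewrite ?inX.
have [c cover] := js_covers X_wraps.
set a := val (((val p.1)%:Z + c)%:~R : 'Z_n).
exists a, (val p.2); split; [exact: Zp_val_lt | exact: Zp_val_lt |].
apply/subsetP => s sS.
have [j js_j dvd_j] := cover _ (inX s sS).
rewrite -(pin_tlift p n_gt1 s).
have -> : pin n (tlift p s) = pt n (a + j)%N (val p.2).
  apply/eqP; rewrite pin_eq //= offset2_eq0 // addr0 subrr dvdz0 andbT.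
  have -> : (val p.1)%:Z + offset p.1 s.1 - (a + j)%N%:Z =
      offset p.1 s.1 - (c + j%:Z) - (a%:Z - ((val p.1)%:Z + c)) by lia.
  by rewrite rpredB // dvdz_val_intr.
exact: mem_trow.
Qed.

Definition box_or_line (X : {set Tor n}) : Prop :=
  (exists u v, X = pbox n k u v) \/
  exists a b, [/\ (a < n)%N, (b < n)%N & X = trow a b \/ X = tcol a b].

(* Either the lifts around a point p are pairwise within k in Z^2, or some pair
   wraps, horizontally or -- after transposing the torus -- vertically. *)
Lemma simplex_sub_box_or_line S : tsimplex n k S -> exists2 X, box_or_line X & S \subset X.
Proof.
move=> S_simplex; have /tsimplexP [/set0Pn [p pS] diam] := S_simplex.
have [close|/forall_inPn [q qS /forall_inPn [r rS far]]] :=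
  boolP [forall s in S, forall t in S, zdist (tlift p s) (tlift p t) <= k]%N.
  have lifts_simplex : zsimplex k [seq tlift p s | s <- enum S].
    split=> [|_ _ /mapP [s + ->] /mapP [t + ->]]; last first.
      by rewrite !mem_enum => sS tS; move/forall_inP/(_ s sS)/forall_inP: close; apply.
    by case E : (enum S) => //; move: pS; rewrite -mem_enum E.
  have [u [v sub]] := zsimplex_sub_box lifts_simplex.
  exists (pbox n k u v); first by left; exists u, v.
  apply/subsetP => s sS; rewrite -(pin_tlift p n_gt1 s); apply: mem_pbox.
  by rewrite -mem_box; apply: sub; apply: map_f; rewrite mem_enum.
have [wrap1|wrap2] : (cycdist n (offset p.1 q.1 - offset p.1 r.1) <
      absz (offset p.1 q.1 - offset p.1 r.1))%N \/
    (cycdist n (offset p.2 q.2 - offset p.2 r.2) < absz (offset p.2 q.2 - offset p.2 r.2))%N.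
  have := diam q r qS rS; rewrite (tdist_offset n_gt1 k_small S_simplex pS qS rS).
  by move: far; rewrite /zdist /cycdist /=; lia.
  have [a [b [a_lt b_lt sub]]] := wrapping_simplex_sub_trow S_simplex pS qS rS wrap1.
  by exists (trow a b) => //; right; exists a, b; split => //; left.
have swap_in x : x \in S -> tswap n x \in tswap n @^-1: S by rewrite inE tswapK.
have [a [b [a_lt b_lt sub]]] := wrapping_simplex_sub_trow (tsimplex_tswap S_simplex)
  (swap_in p pS) (swap_in q qS) (swap_in r rS) wrap2.
exists (tcol b a); first by right; exists b, a; split => //; right.
by rewrite tcol_tswap -[S]preimset_tswapK; apply: preimsetS.
Qed.

Lemma box_or_line_simplex X : box_or_line X -> tsimplex n k X.
Proof.
case=> [[u [v ->]]|[a [b [_ _ [->|->]]]]]; first exact: pbox_simplex.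
  exact: trow_simplex.
by rewrite tcol_tswap; apply: tsimplex_tswap; apply: trow_simplex.
Qed.

Lemma tcol_fst a b x : x \in tcol a b -> x.1 = a%:R.
Proof. by rewrite tcol_tswap inE => /trow_snd. Qed.

Lemma box_or_line_maximal X S : box_or_line X -> tsimplex n k S -> X \subset S -> S \subset X.
Proof.
move=> + S_simplex; case=> [[u [v ->]]|[a [b [_ _ [->|->]]]]] XS; last 2 first.
- exact: trow_maximal.
- rewrite tcol_tswap -[S]preimset_tswapK; apply: preimsetS; apply: trow_maximal.
    exact: tsimplex_tswap.
  by rewrite -[trow b a]preimset_tswapK; apply: preimsetS; rewrite -tcol_tswap.
(* A diamond meets two rows and two columns, so it lies in no line. *)
have [Y [[u' [v' ->]]|[a' [b' [_ _ [->|->]]]]] SY] := simplex_sub_box_or_line S_simplex.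
- by apply: (subset_trans SY); apply: pbox_sub_pbox => //; apply: subset_trans XS SY.
- have [x [y [xX yX _ xy2]]] := pbox_spread k_gt0 k_small u v k_ge2.
  have /subsetP XY := subset_trans XS SY.
  by rewrite (trow_snd (XY x xX)) (trow_snd (XY y yX)) eqxx in xy2.
- have [x [y [xX yX xy1 _]]] := pbox_spread k_gt0 k_small u v k_ge2.
  have /subsetP XY := subset_trans XS SY.
  by rewrite (tcol_fst (XY x xX)) (tcol_fst (XY y yX)) eqxx in xy1.
Qed.

Theorem tmaximal_box_or_line S : tmaximal n k S <->
  Mset n k S \/ exists a b, [/\ (a < n)%N, (b < n)%N & S = trow a b \/ S = tcol a b].
Proof.
rewrite (tmaximal_iff simplex_sub_box_or_line box_or_line_simplex box_or_line_maximal).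
have Mset_box := Mset_pbox S k_gt0.
by split=> [[/Mset_box|]|[/Mset_box|]]; [left|right|left|right].
Qed.

End Patterns.

Lemma cover_shift n (js : seq nat) (c x : int) : (absz (x - c) <= n)%N ->
  (0 <= x - c -> absz (x - c) \in js) -> (x - c < 0 -> absz (x - c + n%:Z) \in js) ->
  exists2 j : nat, j \in js & (n %| x - (c + j%:Z))%Z.
Proof.
move=> xc_le js_pos js_neg; have [le_cx|lt_xc] := lerP 0 (x - c).
  by exists (absz (x - c)); [exact: js_pos | apply/dvdzP; exists 0; lia].
by exists (absz (x - c + n%:Z)); [exact: js_neg | apply/dvdzP; exists (-1); lia].
Qed.

Lemma wraps_ends n k X : (k < n)%N -> wraps n k X ->
  exists x0 y0, [/\ x0 \in X, y0 \in X, x0 < y0 & (n - k <= absz (y0 - x0))%N].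
Proof.
move=> k_lt [_ _ [x0 x0X [y0 y0X gap]]]; have [lt_x0y0|le_y0x0] := ltrP x0 y0.
  by exists x0, y0; split => //; lia.
by exists y0, x0; split => //; lia.
Qed.

Definition offsets3k k : seq nat := [:: 0; k; 2 * k]%N.

Definition offsets3k1 k : seq nat := [:: 0; k; 2 * k - 1; 2 * k]%N.

Section ThreeK.

Variable k : nat.
Hypothesis k_ge2 : (2 <= k)%N.

Local Notation n := (3 * k)%N.

Lemma offsets3k_lt : {in offsets3k k, forall j, (j < n)%N}.
Proof. by move=> j; rewrite !inE; lia. Qed.

Lemma offsets3k_diam : {in offsets3k k &, forall i j, (cycdist n (i%:Z - j%:Z) <= k)%N}.
Proof. by move=> i j; rewrite !inE /cycdist; lia. Qed.

Lemma offsets3k_far t : (t < n)%N ->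
  exists2 j : nat, j \in offsets3k k & (k <= cycdist n (t%:Z - j%:Z))%N.
Proof.
move=> t_lt; have [t_le|t_gt] := leqP t k.
  by exists (2 * k)%N; rewrite ?inE /cycdist; lia.
have [t_le2|t_gt2] := leqP t (2 * k); first by exists 0%N; rewrite ?inE /cycdist; lia.
by exists k; rewrite ?inE /cycdist; lia.
Qed.

Lemma offsets3k_closed t : (t < n)%N ->
  {in offsets3k k, forall j, (cycdist n (t%:Z - j%:Z) <= k)%N} -> t \in offsets3k k.
Proof.
move=> t_lt near; move: (near 0%N) (near k) (near (2 * k)%N).
by rewrite !inE /cycdist !eqxx ?orbT; lia.
Qed.

Lemma wraps3k_cover X : wraps n k X -> exists c : int,
  {in X, forall x : int, exists2 j : nat, j \in offsets3k k & (n %| x - (c + j%:Z))%Z}.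
Proof.
move=> X_wraps.
have [x0 [y0 [x0X y0X lt_x0y0 gap]]] := wraps_ends (ltac:(lia) : (k < n)%N) X_wraps.
case: X_wraps => bound diam _.
have [x0E y0E] : x0 = - k%:Z /\ y0 = k%:Z.
  by move: (bound x0 x0X) (bound y0 y0X) gap lt_x0y0; clear; lia.
subst x0 y0; exists (- k%:Z) => x xX.
have : x = - k%:Z \/ x = 0 \/ x = k%:Z.
  by move: (bound x xX) (diam x _ xX x0X) (diam x _ xX y0X); rewrite /cycdist; clear; lia.
by case=> [|[|]] ->; apply: cover_shift => [|?|?]; rewrite ?inE; lia.
Qed.

Lemma trow3kE a b :
  trow n (offsets3k k) a b = [set pt n a b; pt n (a + k)%N b; pt n (a + 2 * k)%N b].
Proof. by rewrite /trow /= !set_cons set_nil setU0 addn0 !setUA. Qed.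

Lemma tcol3kE a b :
  tcol n (offsets3k k) a b = [set pt n a b; pt n a (b + k)%N; pt n a (b + 2 * k)%N].
Proof. by rewrite /tcol /= !set_cons set_nil setU0 addn0 !setUA. Qed.

Lemma tmaximal_3k S : tmaximal n k S <-> Mset n k S \/ N3k k S.
Proof.
apply: iff_trans (tmaximal_box_or_line k_ge2 _ offsets3k_lt offsets3k_diam
  offsets3k_far offsets3k_closed wraps3k_cover S) _; first by lia.
split=> [[MS|[a [b [a_lt b_lt ab]]]]|[MS|[a [b [a_lt [b_lt ab]]]]]];
  [by left | right | by left | right]; exists a, b.
  by rewrite trow3kE tcol3kE in ab.
by rewrite trow3kE tcol3kE.
Qed.

End ThreeK.

Section ThreeKMinusOne.

Variable k : nat.
Hypothesis k_ge3 : (3 <= k)%N.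

Local Notation n := (3 * k - 1)%N.

Lemma offsets3k1_lt : {in offsets3k1 k, forall j, (j < n)%N}.
Proof. by move=> j; rewrite !inE; lia. Qed.

Lemma offsets3k1_diam : {in offsets3k1 k &, forall i j, (cycdist n (i%:Z - j%:Z) <= k)%N}.
Proof. by move=> i j; rewrite !inE /cycdist; lia. Qed.

Lemma offsets3k1_far t : (t < n)%N ->
  exists2 j : nat, j \in offsets3k1 k & (k <= cycdist n (t%:Z - j%:Z))%N.
Proof.
move=> t_lt; have [t_lt1|t_ge1] := ltnP t k.
  by exists (2 * k - 1)%N; rewrite ?inE /cycdist; lia.
have [t_lt2|t_ge2] := ltnP t (2 * k); first by exists 0%N; rewrite ?inE /cycdist; lia.
by exists k; rewrite ?inE /cycdist; lia.
Qed.

Lemma offsets3k1_closed t : (t < n)%N ->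
  {in offsets3k1 k, forall j, (cycdist n (t%:Z - j%:Z) <= k)%N} -> t \in offsets3k1 k.
Proof.
move=> t_lt near; move: (near 0%N) (near k) (near (2 * k - 1)%N) (near (2 * k)%N).
by rewrite !inE /cycdist !eqxx ?orbT; lia.
Qed.

(* The extreme pair (x0, y0) of X has one of three shapes; in each, whether a
   third value z occurs in X decides which translate of the offsets covers X. *)
Lemma wraps3k1_cover X : wraps n k X -> exists c : int,
  {in X, forall x : int, exists2 j : nat, j \in offsets3k1 k & (n %| x - (c + j%:Z))%Z}.
Proof.
move=> X_wraps.
have [x0 [y0 [x0X y0X lt_x0y0 gap]]] := wraps_ends (ltac:(lia) : (k < n)%N) X_wraps.
case: X_wraps => bound diam _.
have near (z : int) : z \in X -> {in X, forall x : int, (cycdist n (x - z) <= k)%N}.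
  by move=> zX x xX; apply: diam.
have [[x0E y0E]|[[x0E y0E]|[x0E y0E]]] : (x0 = - k%:Z /\ y0 = k%:Z) \/
    (x0 = 1 - k%:Z /\ y0 = k%:Z) \/ (x0 = - k%:Z /\ y0 = k%:Z - 1).
- by move: (bound x0 x0X) (bound y0 y0X) gap lt_x0y0; clear; lia.
- subst x0 y0; have [zX|zNX] := boolP (1 - k%:Z \in X).
  + exists 0 => x xX.
    have : x = - k%:Z \/ x = 1 - k%:Z \/ x = 0 \/ x = k%:Z.
      by move: (bound x xX) (near _ x0X x xX) (near _ y0X x xX) (near _ zX x xX);
        rewrite /cycdist; clear -k_ge3; lia.
    by case=> [|[|[|]]] ->; apply: cover_shift => [|?|?]; rewrite ?inE; lia.
  + exists (- k%:Z) => x xX.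
    have xz : x != 1 - k%:Z by apply: contraNneq zNX => <-.
    have : x = - k%:Z \/ x = 0 \/ x = k%:Z - 1 \/ x = k%:Z.
      by move: (bound x xX) (near _ x0X x xX) (near _ y0X x xX) xz;
        rewrite /cycdist; clear -k_ge3; lia.
    by case=> [|[|[|]]] ->; apply: cover_shift => [|?|?]; rewrite ?inE; lia.
- subst x0 y0; have [zX|zNX] := boolP (- k%:Z \in X).
  + exists 0 => x xX.
    have : x = - k%:Z \/ x = 1 - k%:Z \/ x = 0 \/ x = k%:Z.
      by move: (bound x xX) (near _ x0X x xX) (near _ y0X x xX) (near _ zX x xX);
        rewrite /cycdist; clear -k_ge3; lia.
    by case=> [|[|[|]]] ->; apply: cover_shift => [|?|?]; rewrite ?inE; lia.
  + exists k%:Z => x xX.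
    have xz : x != - k%:Z by apply: contraNneq zNX => <-.
    have : x = 1 - k%:Z \/ x = 0 \/ x = 1 \/ x = k%:Z.
      by move: (bound x xX) (near _ x0X x xX) (near _ y0X x xX) xz;
        rewrite /cycdist; clear -k_ge3; lia.
    by case=> [|[|[|]]] ->; apply: cover_shift => [|?|?]; rewrite ?inE; lia.
- subst x0 y0; have [zX|zNX] := boolP (k%:Z \in X).
  + exists (- k%:Z) => x xX.
    have : x = - k%:Z \/ x = 0 \/ x = k%:Z - 1 \/ x = k%:Z.
      by move: (bound x xX) (near _ x0X x xX) (near _ y0X x xX) (near _ zX x xX);
        rewrite /cycdist; clear -k_ge3; lia.
    by case=> [|[|[|]]] ->; apply: cover_shift => [|?|?]; rewrite ?inE; lia.
  + exists (k%:Z - 1) => x xX.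
    have xz : x != k%:Z by apply: contraNneq zNX => <-.
    have : x = - k%:Z \/ x = -1 \/ x = 0 \/ x = k%:Z - 1.
      by move: (bound x xX) (near _ x0X x xX) (near _ y0X x xX) xz;
        rewrite /cycdist; clear -k_ge3; lia.
    by case=> [|[|[|]]] ->; apply: cover_shift => [|?|?]; rewrite ?inE; lia.
Qed.

Lemma trow3k1E a b : trow n (offsets3k1 k) a b =
  [set pt n a b; pt n (a + k)%N b; pt n (a + 2 * k - 1)%N b; pt n (a + 2 * k)%N b].
Proof.
rewrite /trow /= !set_cons set_nil setU0 addn0 !setUA.
by have -> : (a + (2 * k - 1) = a + 2 * k - 1)%N by lia.
Qed.

Lemma tcol3k1E a b : tcol n (offsets3k1 k) a b =
  [set pt n a b; pt n a (b + k)%N; pt n a (b + 2 * k - 1)%N; pt n a (b + 2 * k)%N].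
Proof.
rewrite /tcol /= !set_cons set_nil setU0 addn0 !setUA.
by have -> : (b + (2 * k - 1) = b + 2 * k - 1)%N by lia.
Qed.

Lemma tmaximal_3k1 S : tmaximal n k S <-> Mset n k S \/ N3k1 k S.
Proof.
apply: iff_trans (tmaximal_box_or_line (ltac:(lia) : (2 <= k)%N) _ offsets3k1_lt
  offsets3k1_diam offsets3k1_far offsets3k1_closed wraps3k1_cover S) _; first by lia.
split=> [[MS|[a [b [a_lt b_lt ab]]]]|[MS|[a [b [a_le [b_le ab]]]]]];
  [by left | right | by left | right]; exists a, b.
  by rewrite trow3k1E tcol3k1E in ab; split; [lia | split; [lia | exact: ab]].
by rewrite trow3k1E tcol3k1E; split; [lia | lia | exact: ab].
Qed.

End ThreeKMinusOne.

Local Close Scope ring_scope.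

Theorem lemma5p5 :
  (forall k : nat, 2 <= k ->
     forall S : {set Tor (3 * k)},
       tmaximal (3 * k) k S <-> (Mset (3 * k) k S \/ N3k k S)) /\
  (forall k : nat, 3 <= k ->
     forall S : {set Tor (3 * k - 1)},
       tmaximal (3 * k - 1) k S <-> (Mset (3 * k - 1) k S \/ N3k1 k S)).
Proof. by split=> [k k_ge2 S | k k_ge3 S]; [exact: tmaximal_3k | exact: tmaximal_3k1]. Qed.
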